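(* For any finite quiver $Q$, $\alpha\in\mathbb{N}^I$ and $\lambda\in\mathbb{C}^I$ with $\lambda\cdot\alpha=0$, the stratification of $\mathcal{N}(\lambda,\alpha)$ by representation type equals its stratification by orbit type: for each representation type $\tau$ with $\mathcal{R}_\tau\neq\emptyset$ there is a conjugacy class $\nu$ of stabilisers with $\mathcal{R}_\tau=\mathcal{N}(\lambda,\alpha)_\nu$.
   Context: $Q$ has vertices $I$, arrows $A$, head/tail $h,t$; $\overline{Q}$ is its double (adjoin $a^*:h(a)\to t(a)$); $\mathrm{Rep}(\overline{Q},\alpha)=\bigoplus_{a\in\overline{A}}\mathrm{Mat}(\alpha_{h(a)}\times\alpha_{t(a)},\mathbb{C})$ with conjugation action of $G(\alpha)=\prod_i\mathrm{GL}(\alpha_i)/\mathbb{C}^\times$; $\mu_\alpha(B)_i=\sum_{a\in A,h(a)=i}B_aB_{a^*}-\sum_{a\in A,t(a)=i}B_{a^*}B_a$; $\mathcal{N}(\lambda,\alpha)=\mu_\alpha^{-1}(\lambda)//G(\alpha)$, $\lambda$ meaning $(\lambda_i\mathrm{Id}_{\alpha_i})$; its points are isomorphism classes of semisimple modules of dimension $\alpha$ over $\Pi_\lambda=\mathbb{C}\overline{Q}/(\sum_{a\in A}[a,a^*]-\sum\lambda_ie_i)$. Representation type of $M_1^{\oplus k_1}\oplus\dots\oplus M_r^{\oplus k_r}$ ($M_t$ non-isomorphic simples of dimension $\beta^{(t)}$) is $(k_1,\beta^{(1)};\dots;k_r,\beta^{(r)})$ up to permutation; $\mathcal{R}_\tau$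 is the set of points of type $\tau$. Orbit type stratum $\mathcal{N}(\lambda,\alpha)_\nu$: points $\phi$ such that the stabilisers in $G(\alpha)$ of points of the unique closed orbit over $\phi$ lie in the conjugacy class $\nu$. *)

From HB Require Import structures.
From mathcomp Require Import all_boot all_order all_algebra.
Set Implicit Arguments. Unset Strict Implicit. Unset Printing Implicit Defensive.
Import Order.TTheory GRing.Theory Num.Theory.
Local Open Scope ring_scope.

Section QuiverReps.
Variable C : fieldType.
Variables (I A : finType) (h t : A -> I).

(* A representation of the double quiver Qbar of dimension vector beta:
   for every a in A a matrix B_a in Mat(beta_{h a} x beta_{t a}) and for the
   adjoined reverse arrow a^* : h a -> t a a matrix B_{a^*} in
   Mat(beta_{t a} x beta_{h a}).  Matrices act on column vectors. *)
Record rep (beta : I -> nat) := Rep {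
  arr  : forall a : A, 'M[C]_(beta (h a), beta (t a));
  arrs : forall a : A, 'M[C]_(beta (t a), beta (h a)) }.

(* transport a square matrix at vertex j to vertex i (0 if i <> j) *)
Definition vcast (beta : I -> nat) (i j : I) (M : 'M[C]_(beta j)) : 'M[C]_(beta i) :=
  match j =P i with
  | ReflectT e => castmx (congr1 beta e, congr1 beta e) M
  | ReflectF _ => 0
  end.

Definition mu (beta : I -> nat) (B : rep beta) (i : I) : 'M[C]_(beta i) :=
  \sum_(a | h a == i) vcast i (arr B a *m arrs B a)
  - \sum_(a | t a == i) vcast i (arrs B a *m arr B a).

Definition is_Pi_mod (lambda : I -> C) (beta : I -> nat) (B : rep beta) : Prop :=
  forall i, mu B i = (lambda i)%:M.

Definition is_hom (beta beta' : I -> nat) (B : rep beta) (B' : rep beta')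
    (phi : forall i, 'M[C]_(beta' i, beta i)) : Prop :=
  forall a, phi (h a) *m arr B a = arr B' a *m phi (t a) /\
            phi (t a) *m arrs B a = arrs B' a *m phi (h a).

Definition is_iso (beta beta' : I -> nat) (B : rep beta) (B' : rep beta') : Prop :=
  exists (phi : forall i, 'M[C]_(beta' i, beta i))
         (psi : forall i, 'M[C]_(beta i, beta' i)),
    [/\ is_hom B B' phi, is_hom B' B psi,
        forall i, psi i *m phi i = 1%:M & forall i, phi i *m psi i = 1%:M].

(* A subspace of
   column vectors is encoded by a matrix S_i whose row space is {v^T | v in U_i}. *)
Definition is_subrep (beta : I -> nat) (B : rep beta) (S : forall i, 'M[C]_(beta i)) : Prop :=
  forall a, (S (t a) *m (arr B a)^T <= S (h a))%MS /\
            (S (h a) *m (arrs B a)^T <= S (t a))%MS.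

Definition is_simple (beta : I -> nat) (B : rep beta) : Prop :=
  (exists i, 0 < beta i)%N /\
  forall S, is_subrep B S ->
    (forall i, \rank (S i) = 0%N) \/ (forall i, row_full (S i)).

(* representation types: lists of pairs (k_t, beta^(t)), read up to permutation *)
Definition reptype := seq (nat * {ffun I -> nat}).
Definition rt_mult (tau : reptype) (s : 'I_(size tau)) : nat :=
  (nth (0%N, [ffun => 0%N]) tau s).1.
Definition rt_dim (tau : reptype) (s : 'I_(size tau)) : I -> nat :=
  (nth (0%N, [ffun => 0%N]) tau s).2.
Arguments rt_mult : clear implicits.
Arguments rt_dim : clear implicits.

(* B has representation type tau = (k_1, beta^(1); ...; k_r, beta^(r)):
   B is isomorphic to M_1^{k_1} (+) ... (+) M_r^{k_r} with M_s pairwise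
   non-isomorphic simple Pi_lambda-modules of dimension beta^(s), k_s >= 1.
   The direct sum is expressed by its biproduct injections/projections. *)
Definition has_reptype (lambda : I -> C) (alpha : I -> nat) (B : rep alpha)
    (tau : reptype) : Prop :=
  exists M : forall s : 'I_(size tau), rep (rt_dim tau s),
    [/\ forall s, (0 < rt_mult tau s)%N,
        forall s, is_Pi_mod lambda (M s) /\ is_simple (M s),
        forall s s', s != s' -> ~ is_iso (M s) (M s') &
        exists (iota : forall s (c : 'I_(rt_mult tau s)) i, 'M[C]_(alpha i, rt_dim tau s i))
               (pi : forall s (c : 'I_(rt_mult tau s)) i, 'M[C]_(rt_dim tau s i, alpha i)),
          [/\ forall s c, is_hom (M s) B (iota s c),
              forall s c, is_hom B (M s) (pi s c),
              forall s c i, pi s c i *m iota s c i = 1%:M,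
              forall s c s' c' i, (s, val c) != (s', val c') ->
                 pi s' c' i *m iota s c i = 0 &
              forall i, \sum_(s < size tau) \sum_(c < rt_mult tau s)
                          iota s c i *m pi s c i = 1%:M]].

Definition semisimple (lambda : I -> C) (alpha : I -> nat) (B : rep alpha) : Prop :=
  exists tau, has_reptype lambda B tau.

Definition GLfam (alpha : I -> nat) := forall i, 'M[C]_(alpha i).
Definition in_GL (alpha : I -> nat) (g : GLfam alpha) : Prop :=
  forall i, g i \in unitmx.

Definition stab (alpha : I -> nat) (B : rep alpha) (g : GLfam alpha) : Prop :=
  in_GL g /\
  forall a, g (h a) *m arr B a *m invmx (g (t a)) = arr B a /\
            g (t a) *m arrs B a *m invmx (g (h a)) = arrs B a.

Definition conj_subsets (alpha : I -> nat) (S1 S2 : GLfam alpha -> Prop) : Prop :=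
  exists g : GLfam alpha, in_GL g /\
    forall x, S1 x <-> S2 (fun i => g i *m x i *m invmx (g i)).

End QuiverReps.

From HB Require Import structures.
From mathcomp Require Import all_boot all_order all_algebra.
From mathcomp Require Import reals complex.
From Stdlib Require Import FunctionalExtensionality.
Set Implicit Arguments. Unset Strict Implicit. Unset Printing Implicit Defensive.
Import Order.TTheory GRing.Theory Num.Theory.
Local Open Scope ring_scope.

(* Write a semisimple module as B = (+)_s M_s^(k_s) through biproduct maps
   [iota s c] and [pi s c].  By Schur's lemma every endomorphism of B is
   block-scalar in the matrix units [iota s c *m pi s c'], so End(B) is
   (+)_s Mat_(k_s)(C) and the stabiliser of B is its group of units.  Two
   modules of the same type therefore have stabilisers conjugated by the change
   of biproduct basis.  Conversely, after conjugating B we may assume that its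
   stabiliser equals that of B0; since an idempotent e and a square-zero n of
   End(B) are recovered from the units 1 - 2e and 1 + n, the two endomorphism
   algebras then coincide.  The isotypic projections of either decomposition
   are the primitive central idempotents of this common algebra, which matches
   the summands, and traces of isotypic and primitive idempotents give equal
   multiplicities and dimension vectors. *)

Section QuiverModules.
Variable C : numClosedFieldType.
Variables (I A : finType) (h t : A -> I).
Local Notation rep := (rep C h t).

Section HomAlgebra.
Variables (b1 b2 : I -> nat) (B1 : rep b1) (B2 : rep b2).

Lemma hom_eq (f g : forall i, 'M[C]_(b2 i, b1 i)) :
  (forall i, f i = g i) -> is_hom B1 B2 f -> is_hom B1 B2 g.
Proof. by move=> e Hf a; rewrite -!e. Qed.

Lemma hom0 : is_hom B1 B2 (fun i => 0).
Proof. by move=> a; rewrite !mulmx0 !mul0mx. Qed.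

Lemma hom_add (f g : forall i, 'M[C]_(b2 i, b1 i)) :
  is_hom B1 B2 f -> is_hom B1 B2 g -> is_hom B1 B2 (fun i => f i + g i).
Proof.
move=> Hf Hg a; have [f1 f2] := Hf a; have [g1 g2] := Hg a.
by rewrite !mulmxDl !mulmxDr f1 f2 g1 g2.
Qed.

Lemma hom_sub (f g : forall i, 'M[C]_(b2 i, b1 i)) :
  is_hom B1 B2 f -> is_hom B1 B2 g -> is_hom B1 B2 (fun i => f i - g i).
Proof.
move=> Hf Hg a; have [f1 f2] := Hf a; have [g1 g2] := Hg a.
by rewrite !mulmxBl !mulmxBr f1 f2 g1 g2.
Qed.

Lemma hom_sum (J : finType) (P : pred J) (f : J -> forall i, 'M[C]_(b2 i, b1 i)) :
  (forall j, is_hom B1 B2 (f j)) -> is_hom B1 B2 (fun i => \sum_(j | P j) f j i).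
Proof.
move=> Hf; elim: (index_enum J) => [|j s IH].
  by apply: hom_eq hom0 => i; rewrite big_nil.
case Pj: (P j); last by apply: hom_eq IH => i; rewrite big_cons Pj.
by apply: hom_eq (hom_add (Hf j) IH) => i; rewrite big_cons Pj.
Qed.

End HomAlgebra.

Lemma hom_scalar (b : I -> nat) (B : rep b) (c : C) : is_hom B B (fun i => c%:M).
Proof. by move=> a; rewrite !mul_scalar_mx !mul_mx_scalar. Qed.

Lemma hom_comp (b1 b2 b3 : I -> nat) (B1 : rep b1) (B2 : rep b2) (B3 : rep b3)
    (f : forall i, 'M[C]_(b2 i, b1 i)) (g : forall i, 'M[C]_(b3 i, b2 i)) :
  is_hom B1 B2 f -> is_hom B2 B3 g -> is_hom B1 B3 (fun i => g i *m f i).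
Proof.
move=> Hf Hg a; have [f1 f2] := Hf a; have [g1 g2] := Hg a.
by rewrite -!mulmxA f1 f2 !mulmxA g1 g2.
Qed.

Lemma hom_inv (b1 b2 : I -> nat) (B1 : rep b1) (B2 : rep b2)
    (f : forall i, 'M[C]_(b2 i, b1 i)) (g : forall i, 'M[C]_(b1 i, b2 i)) :
  (forall i, g i *m f i = 1%:M) -> (forall i, f i *m g i = 1%:M) ->
  is_hom B1 B2 f -> is_hom B2 B1 g.
Proof.
move=> gf fg Hf a; have [f1 f2] := Hf a; split.
  by rewrite -[LHS]mulmx1 -(fg (t a)) !mulmxA -(mulmxA (g _)) -f1 mulmxA gf mul1mx.
by rewrite -[LHS]mulmx1 -(fg (h a)) !mulmxA -(mulmxA (g _)) -f2 mulmxA gf mul1mx.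
Qed.

(* Subrepresentations are encoded by row spaces of transposed column vectors,
   hence the kernel and image of [f] appear as those of [(f i)^T]. *)
Lemma hom_from_simple (b1 b2 : I -> nat) (M : rep b1) (N : rep b2)
    (f : forall i, 'M[C]_(b2 i, b1 i)) :
  is_simple M -> is_hom M N f ->
  (forall i, f i = 0) \/ (forall i, row_free (f i)^T).
Proof.
move=> [_ simM] Hf.
have subK : is_subrep M (fun i => kermx (f i)^T).
  move=> a; have [f1 f2] := Hf a; split; rewrite sub_kermx -mulmxA -trmx_mul.
    by rewrite f1 trmx_mul mulmxA mulmx_ker mul0mx.
  by rewrite f2 trmx_mul mulmxA mulmx_ker mul0mx.
case: (simM _ subK) => HK; [right | left] => i.
  by rewrite -kermx_eq0 -mxrank_eq0 HK.
have : (1%:M <= kermx (f i)^T)%MS by apply: submx_full; apply: HK.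
rewrite sub_kermx mul1mx => /eqP fT0.
by rewrite -(trmxK (f i)) fT0 trmx0.
Qed.

Lemma hom_to_simple (b1 b2 : I -> nat) (N : rep b1) (M : rep b2)
    (f : forall i, 'M[C]_(b2 i, b1 i)) :
  is_simple M -> is_hom N M f ->
  (forall i, f i = 0) \/ (forall i, row_full (f i)^T).
Proof.
move=> [_ simM] Hf.
have subIm : is_subrep M (fun i => <<(f i)^T>>%MS).
  move=> a; have [f1 f2] := Hf a.
  have genT i : (<<(f i)^T>> <= (f i)^T)%MS by rewrite genmxE.
  split; apply: submx_trans (submxMr _ (genT _)) _.
    by rewrite genmxE -trmx_mul -f1 trmx_mul submxMl.
  by rewrite genmxE -trmx_mul -f2 trmx_mul submxMl.
case: (simM _ subIm) => HIm; [left | right] => i.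
  have := HIm i; rewrite genmxE => /eqP; rewrite mxrank_eq0 => /eqP fT0.
  by rewrite -(trmxK (f i)) fT0 trmx0.
by have := HIm i; rewrite /row_full genmxE.
Qed.

Lemma schur_iso (b1 b2 : I -> nat) (M : rep b1) (N : rep b2)
    (f : forall i, 'M[C]_(b2 i, b1 i)) :
  is_simple M -> is_simple N -> is_hom M N f -> (exists i, f i != 0) ->
  is_iso M N.
Proof.
move=> simM simN Hf [i0 nz_f].
have free i : row_free (f i)^T.
  by case: (hom_from_simple simM Hf) => // f0; rewrite f0 eqxx in nz_f.
have full i : row_full (f i)^T.
  by case: (hom_to_simple simN Hf) => // f0; rewrite f0 eqxx in nz_f.
pose g i := (pinvmx (f i)^T)^T.
have gf i : g i *m f i = 1%:M.
  by rewrite /g -[f i]trmxK -trmx_mul trmxK mulmxVp // trmx1.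
have fg i : f i *m g i = 1%:M.
  by rewrite /g -[f i]trmxK -trmx_mul trmxK mulVpmx // trmx1.
by exists f, g; split => //; apply: hom_inv gf fg Hf.
Qed.

(* An eigenvalue exists because [C] is algebraically closed. *)
Lemma schur_scalar (b : I -> nat) (M : rep b) (f : forall i, 'M[C]_(b i)) :
  is_simple M -> is_hom M M f -> exists a : C, forall i, f i = a%:M.
Proof.
move=> simM Hf; have [[i0 b_i0] _] := simM.
have : size (char_poly (f i0)^T) != 1%N by rewrite size_char_poly; case: (b i0) b_i0.
case/closed_rootP => a; rewrite -eigenvalue_root_char /eigenvalue /eigenspace => eig_a.
exists a; case: (hom_from_simple simM (hom_sub Hf (hom_scalar M a))) => Hfa.
  by move=> i; apply/eqP; rewrite -subr_eq0 Hfa.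
have := Hfa i0; rewrite -kermx_eq0 linearB /= tr_scalar_mx => /eqP E.
by rewrite E eqxx in eig_a.
Qed.

Lemma scalar_mx_inj (m : nat) (x y : C) : (0 < m)%N -> (x%:M : 'M[C]_m) = y%:M -> x = y.
Proof.
move=> m_gt0 /matrixP /(_ (Ordinal m_gt0) (Ordinal m_gt0)).
by rewrite !mxE eqxx !mulr1n.
Qed.

Lemma mxtrace_idem (m : nat) (X : 'M[C]_m) : X *m X = X -> \tr X = (\rank X)%:R.
Proof.
move=> XX; move: (col_base X) (row_base X) (mulmx_base X) (col_base_full X) (row_base_free X).
move=> L R LR /row_fullP [L' L'L] freeR.
have RL : R *m L = 1%:M.
  have e : L *m (R *m L) *m R = L *m 1%:M *m R.
    by rewrite mulmx1 !mulmxA -(mulmxA (L *m R)) LR XX.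
  have := congr1 (mulmx L') e; rewrite -!mulmxA !(mulmxA L') L'L !mul1mx => e2.
  by apply: (row_free_inj freeR); rewrite mul1mx -mulmxA.
by rewrite -[in LHS]LR mxtrace_mulC RL mxtrace1.
Qed.

Lemma idem_reflection_unit (m : nat) (U : 'M[C]_m) : U *m U = U ->
  (1%:M - 2%:R *: U) *m (1%:M - 2%:R *: U) = 1%:M.
Proof.
move=> UU; set V := 2%:R *: U.
have VV : V *m V = V + V by rewrite /V -scalemxAl -scalemxAr UU scaler_nat mulr2n.
by rewrite mulmxBl !mulmxBr !mul1mx mulmx1 VV opprB addrK subrK.
Qed.

Lemma sqr0_unipotent_unit (m : nat) (U : 'M[C]_m) : U *m U = 0 ->
  (1%:M + U) *m (1%:M - U) = 1%:M.
Proof. by move=> UU; rewrite mulmxDl !mulmxBr !mul1mx mulmx1 UU subr0 subrK. Qed.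

Record decomp (lambda : I -> C) (al : I -> nat) (B : rep al) (n : nat)
    (k : 'I_n -> nat) (d : 'I_n -> I -> nat) (M : forall s, rep (d s))
    (iota : forall s (c : 'I_(k s)) i, 'M[C]_(al i, d s i))
    (pi : forall s (c : 'I_(k s)) i, 'M[C]_(d s i, al i)) : Prop := Decomp {
  mult_gt0 : forall s, (0 < k s)%N;
  summand_Pi : forall s, is_Pi_mod lambda (M s);
  summand_simple : forall s, is_simple (M s);
  summand_noniso : forall s s', s != s' -> ~ is_iso (M s) (M s');
  iota_hom : forall s (c : 'I_(k s)), is_hom (M s) B (iota s c);
  pi_hom : forall s (c : 'I_(k s)), is_hom B (M s) (pi s c);
  pi_iota : forall s (c : 'I_(k s)) i, pi s c i *m iota s c i = 1%:M;
  pi_iota_ne : forall s (c : 'I_(k s)) s' (c' : 'I_(k s')) i,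
    (s, val c) != (s', val c') -> pi s' c' i *m iota s c i = 0;
  sum_iota_pi : forall i, \sum_s \sum_(c : 'I_(k s)) iota s c i *m pi s c i = 1%:M }.

Section Decomposition.
Unset Implicit Arguments.
Variables (lambda : I -> C) (al : I -> nat) (B : rep al) (n : nat)
  (k : 'I_n -> nat) (d : 'I_n -> I -> nat) (M : forall s, rep (d s))
  (iota : forall s (c : 'I_(k s)) i, 'M[C]_(al i, d s i))
  (pi : forall s (c : 'I_(k s)) i, 'M[C]_(d s i, al i)).
Set Implicit Arguments.
Hypothesis D : decomp lambda B M iota pi.

Lemma pi_iota_cross s s' (c : 'I_(k s)) (c' : 'I_(k s')) i :
  s != s' -> pi s' c' i *m iota s c i = 0.
Proof. by move=> ne; apply: (pi_iota_ne D); rewrite xpair_eqE negb_and ne. Qed.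

Lemma pi_iota_block s (c c' : 'I_(k s)) i :
  pi s c' i *m iota s c i = if c == c' then 1%:M else 0.
Proof.
case: eqP => [<-|ne]; first exact: (pi_iota D).
by apply: (pi_iota_ne D); rewrite xpair_eqE eqxx (inj_eq val_inj); apply/eqP.
Qed.

Lemma summand_dim_gt0 s : exists i, (0 < d s i)%N.
Proof. by case: (summand_simple D s). Qed.

Lemma mxunit_hom s (c c' : 'I_(k s)) : is_hom B B (fun i => iota s c i *m pi s c' i).
Proof. exact: hom_comp (pi_hom D c') (iota_hom D c). Qed.

Lemma end_cross (phi : forall i, 'M[C]_(al i)) s s' (c : 'I_(k s)) (c' : 'I_(k s')) i :
  is_hom B B phi -> s != s' -> pi s' c' i *m phi i *m iota s c i = 0.
Proof.
move=> Hphi ne.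
have Hg : is_hom (M s) (M s') (fun i => pi s' c' i *m (phi i *m iota s c i)).
  exact: hom_comp (hom_comp (iota_hom D c) Hphi) (pi_hom D c').
case: (boolP [exists i, pi s' c' i *m (phi i *m iota s c i) != 0]) => [/existsP nz|].
  by case: (summand_noniso D ne); exact: schur_iso (summand_simple D s) (summand_simple D s') Hg nz.
by rewrite negb_exists => /forallP /(_ i); rewrite negbK mulmxA => /eqP.
Qed.

Lemma end_block_scalar (phi : forall i, 'M[C]_(al i)) s (c c' : 'I_(k s)) :
  is_hom B B phi -> exists a : C, forall i, pi s c' i *m phi i *m iota s c i = a%:M.
Proof.
move=> Hphi.
have Hg : is_hom (M s) (M s) (fun i => pi s c' i *m (phi i *m iota s c i)).
  exact: hom_comp (hom_comp (iota_hom D c) Hphi) (pi_hom D c').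
by have [a Ha] := schur_scalar (summand_simple D s) Hg; exists a => i; rewrite -mulmxA.
Qed.

Lemma pi_end_expand (phi : forall i, 'M[C]_(al i)) s (c : 'I_(k s)) i :
  is_hom B B phi ->
  pi s c i *m phi i = \sum_c' pi s c i *m phi i *m iota s c' i *m pi s c' i.
Proof.
move=> Hphi; rewrite -[LHS]mulmx1 -(sum_iota_pi D i) mulmx_sumr (bigD1 s) //=.
rewrite [X in _ + X]big1 ?addr0 => [|s' ne].
  by rewrite mulmx_sumr; apply: eq_bigr => c' _; rewrite mulmxA.
rewrite mulmx_sumr big1 // => c' _.
by rewrite mulmxA (end_cross _ _ _ Hphi) ?mul0mx // eq_sym.
Qed.

Lemma end_iota_expand (phi : forall i, 'M[C]_(al i)) s (c : 'I_(k s)) i :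
  is_hom B B phi ->
  phi i *m iota s c i = \sum_c' iota s c' i *m (pi s c' i *m phi i *m iota s c i).
Proof.
move=> Hphi; rewrite -[LHS]mul1mx -(sum_iota_pi D i) mulmx_suml (bigD1 s) //=.
rewrite [X in _ + X]big1 ?addr0 => [|s' ne].
  by rewrite mulmx_suml; apply: eq_bigr => c' _; rewrite !mulmxA.
rewrite mulmx_suml big1 // => c' _.
by rewrite -!mulmxA (mulmxA (pi _ _ _)) (end_cross _ _ _ Hphi) ?mulmx0 // eq_sym.
Qed.

Lemma end_expand (phi : forall i, 'M[C]_(al i)) i :
  is_hom B B phi -> phi i = \sum_s \sum_c \sum_c'
    iota s c i *m (pi s c i *m phi i *m iota s c' i) *m pi s c' i.
Proof.
move=> Hphi; rewrite -[LHS]mul1mx -(sum_iota_pi D i) mulmx_suml.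
apply: eq_bigr => s _; rewrite mulmx_suml; apply: eq_bigr => c _.
rewrite -mulmxA [in LHS](pi_end_expand _ _ Hphi) mulmx_sumr.
by apply: eq_bigr => c' _; rewrite !mulmxA.
Qed.

(* Every endomorphism is a combination of the matrix units [iota s c *m pi s c'],
   by Schur's lemma. *)
Lemma end_of_mxunits (B' : rep al) :
  (forall s (c c' : 'I_(k s)), is_hom B' B' (fun i => iota s c i *m pi s c' i)) ->
  forall phi, is_hom B B phi -> is_hom B' B' phi.
Proof.
move=> units phi Hphi; apply: hom_eq (fun i => esym (end_expand i Hphi)) _.
apply: hom_sum => s; apply: hom_sum => c; apply: hom_sum => c'.
have [a Ha] := end_block_scalar c' c Hphi.
apply: hom_eq (hom_comp (units s c c') (hom_scalar B' a)) => i /=.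
by rewrite Ha mul_scalar_mx mul_mx_scalar scalemxAl.
Qed.

(* Idempotent and square-zero endomorphisms [U] are recovered from the
   automorphisms [1 - 2U] and [1 + U]. *)
Lemma end_of_units (B' : rep al) :
  (forall x, in_GL x -> is_hom B B x -> is_hom B' B' x) ->
  forall phi, is_hom B B phi -> is_hom B' B' phi.
Proof.
move=> units; apply: end_of_mxunits => s c c'.
set U := fun i => iota s c i *m pi s c' i.
have HU : is_hom B B U := mxunit_hom c c'.
have UU i : U i *m U i = if c == c' then U i else 0.
  rewrite /U /= mulmxA -(mulmxA _ (pi _ _ _)) pi_iota_block.
  by case: eqP; rewrite ?mulmx1 ?mulmx0 ?mul0mx.
case: (eqVneq c c') => [e | ne].
  have GL_V : in_GL (fun i => 1%:M - 2%:R *: U i).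
    by move=> i; apply: (mulmx1_unit (idem_reflection_unit _)).1; rewrite UU e eqxx.
  have HV : is_hom B B (fun i => 1%:M - 2%:R *: U i).
    by apply: hom_eq (hom_sub (hom_scalar B 1) (hom_comp HU (hom_scalar B 2%:R))) => i;
      rewrite mul_scalar_mx.
  apply: hom_eq (hom_comp (hom_sub (hom_scalar B' 1) (units _ GL_V HV))
                          (hom_scalar B' 2%:R^-1)) => i.
  by rewrite opprB addrC subrK mul_scalar_mx scalerA mulVf ?scale1r // pnatr_eq0.
have GL_V : in_GL (fun i => 1%:M + U i).
  by move=> i; apply: (mulmx1_unit (sqr0_unipotent_unit _)).1; rewrite UU (negbTE ne).
have HV := units _ GL_V (hom_add (hom_scalar B 1) HU).
by apply: hom_eq (hom_sub HV (hom_scalar B' 1)) => i; rewrite addrAC subrr add0r.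
Qed.

Definition isoproj s i := \sum_(c : 'I_(k s)) iota s c i *m pi s c i.

Lemma isoproj_hom s : is_hom B B (isoproj s).
Proof. by apply: hom_sum => c; apply: mxunit_hom. Qed.

Lemma pi_isoproj s (c : 'I_(k s)) s' i :
  pi s c i *m isoproj s' i = if s' == s then pi s c i else 0.
Proof.
rewrite /isoproj mulmx_sumr; case: eqVneq => [-> | ne].
  rewrite (bigD1 c) //= mulmxA (pi_iota D) mul1mx big1 ?addr0 // => c' ne'.
  by rewrite mulmxA pi_iota_block (negbTE ne') mul0mx.
by rewrite big1 // => c' _; rewrite mulmxA pi_iota_cross ?mul0mx.
Qed.

Lemma isoproj_iota s (c : 'I_(k s)) s' i :
  isoproj s' i *m iota s c i = if s' == s then iota s c i else 0.
Proof.
rewrite /isoproj mulmx_suml; case: eqVneq => [-> | ne].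
  rewrite (bigD1 c) //= -mulmxA (pi_iota D) mulmx1 big1 ?addr0 // => c' ne'.
  by rewrite -mulmxA pi_iota_block eq_sym (negbTE ne') mulmx0.
by rewrite big1 // => c' _; rewrite -mulmxA pi_iota_cross ?mulmx0 // eq_sym.
Qed.

Lemma isoproj_mul s s' i :
  isoproj s i *m isoproj s' i = if s == s' then isoproj s i else 0.
Proof.
rewrite {2}/isoproj mulmx_sumr; case: eqVneq => [-> | ne].
  by apply: eq_bigr => c _; rewrite mulmxA isoproj_iota eqxx.
by rewrite big1 // => c _; rewrite mulmxA isoproj_iota (negbTE ne) mul0mx.
Qed.

Lemma isoproj_central (phi : forall i, 'M[C]_(al i)) s i :
  is_hom B B phi -> isoproj s i *m phi i = phi i *m isoproj s i.
Proof.
move=> Hphi; rewrite /isoproj mulmx_suml mulmx_sumr.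
transitivity (\sum_c \sum_c' iota s c i *m (pi s c i *m phi i *m iota s c' i) *m pi s c' i).
  apply: eq_bigr => c _; rewrite -mulmxA [in LHS](pi_end_expand _ _ Hphi) mulmx_sumr.
  by apply: eq_bigr => c' _; rewrite !mulmxA.
rewrite exchange_big /=; apply: eq_bigr => c' _.
rewrite mulmxA (end_iota_expand _ _ Hphi) mulmx_suml.
by apply: eq_bigr => c _; rewrite !mulmxA.
Qed.

Lemma mxtrace_isoproj s i : \tr (isoproj s i) = (k s * d s i)%:R.
Proof.
rewrite /isoproj raddf_sum /= (eq_bigr (fun _ => (d s i)%:R)) => [|c _].
  by rewrite sumr_const card_ord natrM mulrC mulr_natr.
by rewrite mxtrace_mulC (pi_iota D) mxtrace1.
Qed.

Lemma isoproj_neq0 s : exists i, isoproj s i != 0.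
Proof.
have [i d_gt0] := summand_dim_gt0 s; exists i; apply: contraTneq isT => P0.
have := pi_isoproj (Ordinal (mult_gt0 D s)) s i; rewrite P0 mulmx0 eqxx.
move/(congr1 (mulmx^~ (iota s (Ordinal (mult_gt0 D s)) i))).
rewrite mul0mx (pi_iota D) => /matrixP /(_ (Ordinal d_gt0) (Ordinal d_gt0)).
by rewrite !mxE eqxx /= => /eqP; rewrite eq_sym oner_eq0.
Qed.

Lemma isoproj_comb_mul (a : 'I_n -> C) s i :
  (\sum_s' a s' *: isoproj s' i) *m isoproj s i = a s *: isoproj s i.
Proof.
rewrite mulmx_suml (bigD1 s) //= -scalemxAl isoproj_mul eqxx big1 ?addr0 // => s' ne.
by rewrite -scalemxAl isoproj_mul (negbTE ne) scaler0.
Qed.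

Lemma isoproj_comb_block (a : 'I_n -> C) s (c : 'I_(k s)) i :
  pi s c i *m (\sum_s' a s' *: isoproj s' i) *m iota s c i = (a s)%:M.
Proof.
rewrite mulmx_sumr mulmx_suml (bigD1 s) //= big1 ?addr0 => [|s' ne].
  by rewrite -scalemxAr -scalemxAl pi_isoproj eqxx (pi_iota D) scalemx1.
by rewrite -scalemxAr -scalemxAl pi_isoproj (negbTE ne) mul0mx scaler0.
Qed.

Lemma isoproj_comb_inj (a b : 'I_n -> C) :
  (forall i, \sum_s a s *: isoproj s i = \sum_s b s *: isoproj s i) -> a =1 b.
Proof.
move=> ab s; have [i d_gt0] := summand_dim_gt0 s.
apply: (scalar_mx_inj d_gt0).
by rewrite -(isoproj_comb_block a (Ordinal (mult_gt0 D s))) ab isoproj_comb_block.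
Qed.

Lemma isoproj_inj s s' : (forall i, isoproj s i = isoproj s' i) -> s = s'.
Proof.
move=> ss'; apply/eqP; have [i nz] := isoproj_neq0 s.
apply: contraNT nz => ne.
by have := isoproj_mul s s' i; rewrite -ss' isoproj_mul eqxx (negbTE ne) => ->.
Qed.

Lemma central_end_comb (z : forall i, 'M[C]_(al i)) :
  is_hom B B z -> (forall phi, is_hom B B phi -> forall i, z i *m phi i = phi i *m z i) ->
  exists a : 'I_n -> C, forall i, z i = \sum_s a s *: isoproj s i.
Proof.
move=> Hz central; pose c0 s : 'I_(k s) := Ordinal (mult_gt0 D s).
have /fin_all_exists [a Ha] : forall s, exists a : C,
    forall i, pi s (c0 s) i *m z i *m iota s (c0 s) i = a%:M.
  by move=> s; apply: end_block_scalar.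
have block s (c c' : 'I_(k s)) i :
    pi s c i *m z i *m iota s c' i = if c == c' then (a s)%:M else 0.
  have zc := central _ (mxunit_hom (c0 s) c) i; rewrite /= in zc.
  have -> : pi s c i *m z i *m iota s c' i =
      pi s (c0 s) i *m ((iota s (c0 s) i *m pi s c i) *m z i) *m iota s c' i.
    by rewrite !mulmxA (pi_iota D) mul1mx.
  rewrite -zc !mulmxA Ha -mulmxA pi_iota_block eq_sym.
  by case: eqP; rewrite ?mulmx1 ?mulmx0.
exists a => i; rewrite (end_expand i Hz); apply: eq_bigr => s _.
rewrite /isoproj scaler_sumr; apply: eq_bigr => c _.
rewrite (bigD1 c) //= big1 ?addr0 => [|c' ne].
  by rewrite block eqxx mul_mx_scalar scalemxAl.
by rewrite block eq_sym (negbTE ne) mulmx0 mul0mx.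
Qed.

Lemma central_idem_end_comb (z : forall i, 'M[C]_(al i)) :
  is_hom B B z -> (forall phi, is_hom B B phi -> forall i, z i *m phi i = phi i *m z i) ->
  (forall i, z i *m z i = z i) ->
  exists a : 'I_n -> C,
    (forall s, a s = 0 \/ a s = 1) /\ forall i, z i = \sum_s a s *: isoproj s i.
Proof.
move=> Hz central idem; have [a Ha] := central_end_comb Hz central.
exists a; split => // s.
have aa : (fun s => a s * a s) =1 a.
  apply: isoproj_comb_inj => i; rewrite -Ha -[in RHS]idem {2}(Ha i) mulmx_sumr.
  by apply: eq_bigr => s' _; rewrite -scalemxAr Ha isoproj_comb_mul scalerA.
have := aa s; move/eqP; rewrite -{3}[a s]mulr1 -subr_eq0 -mulrBr mulf_eq0 subr_eq0.
by case/orP => /eqP ->; [left | right].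
Qed.

Lemma block_end_expand (w : forall i, 'M[C]_(al i)) u i :
  is_hom B B w -> (forall i, isoproj u i *m w i = w i) ->
  w i = \sum_e \sum_e' iota u e i *m (pi u e i *m w i *m iota u e' i) *m pi u e' i.
Proof.
move=> Hw inU; rewrite [LHS](end_expand i Hw) (bigD1 u) //= [X in _ + X]big1 ?addr0 // => s ne.
apply: big1 => e _; apply: big1 => e' _.
by rewrite -inU (mulmxA (pi _ _ _)) pi_isoproj eq_sym (negbTE ne) !mul0mx mulmx0 mul0mx.
Qed.

(* The block coefficients of [w] form an idempotent scalar matrix [X], so the
   trace of [w] is [\rank X] times the dimension of the summand. *)
Lemma idem_block_trace (w : forall i, 'M[C]_(al i)) u :
  is_hom B B w -> (forall i, w i *m w i = w i) -> (forall i, isoproj u i *m w i = w i) ->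
  exists r, forall i, \tr (w i) = (r * d u i)%:R.
Proof.
move=> Hw idem inU.
have /fin_all_exists [x Hx] : forall e : 'I_(k u), exists f : 'I_(k u) -> C,
    forall e' i, pi u e i *m w i *m iota u e' i = (f e')%:M.
  move=> e; have /fin_all_exists [f Hf] : forall e' : 'I_(k u), exists a : C,
      forall i, pi u e i *m w i *m iota u e' i = a%:M.
    by move=> e'; apply: end_block_scalar.
  by exists f.
pose X := \matrix_(e, e') x e e'.
have XX : X *m X = X.
  apply/matrixP => e e'; rewrite !mxE; have [i d_gt0] := summand_dim_gt0 u.
  apply: (scalar_mx_inj d_gt0); rewrite -Hx -[in RHS]idem mulmxA.
  rewrite [in RHS](pi_end_expand _ _ Hw) !mulmx_suml raddf_sum /=.
  by apply: eq_bigr => f _; rewrite !mxE scalar_mxM -!Hx !mulmxA.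
exists (\rank X) => i; rewrite natrM -mxtrace_idem //.
rewrite [in LHS](block_end_expand i Hw inU) raddf_sum [in RHS]/mxtrace mulr_suml.
apply: eq_bigr => e _; rewrite raddf_sum (bigD1 e) //= big1 ?addr0 => [|e' ne].
  by rewrite Hx mxtrace_mulC mul_mx_scalar -scalemxAr mxtraceZ (pi_iota D) mxtrace1 mxE.
rewrite Hx mxtrace_mulC mul_mx_scalar -scalemxAr pi_iota_block eq_sym (negbTE ne).
by rewrite scaler0 mxtrace0.
Qed.

End Decomposition.

Definition basis_change (al : I -> nat) (n : nat) (k : 'I_n -> nat) (d : 'I_n -> I -> nat)
    (iota : forall s (c : 'I_(k s)) i, 'M[C]_(al i, d s i))
    (pi : forall s (c : 'I_(k s)) i, 'M[C]_(d s i, al i)) i :=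
  \sum_s \sum_(c : 'I_(k s)) iota s c i *m pi s c i.

Section BasisChange.
Unset Implicit Arguments.
Variables (lambda : I -> C) (al : I -> nat) (B B' : rep al) (n : nat)
  (k : 'I_n -> nat) (d : 'I_n -> I -> nat) (M M' : forall s, rep (d s))
  (iota iota' : forall s (c : 'I_(k s)) i, 'M[C]_(al i, d s i))
  (pi pi' : forall s (c : 'I_(k s)) i, 'M[C]_(d s i, al i)).
Set Implicit Arguments.
Hypotheses (D : decomp lambda B M iota pi) (D' : decomp lambda B' M' iota' pi').

Lemma basis_change_iota s (c : 'I_(k s)) i : basis_change iota' pi i *m iota s c i = iota' s c i.
Proof.
rewrite /basis_change mulmx_suml (bigD1 s) //= [X in _ + X]big1 ?addr0 => [|s' ne].
  rewrite mulmx_suml (bigD1 c) //= -mulmxA (pi_iota D) mulmx1 big1 ?addr0 // => c' ne'.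
  by rewrite -mulmxA (pi_iota_block D) eq_sym (negbTE ne') mulmx0.
by rewrite mulmx_suml big1 // => c' _; rewrite -mulmxA (pi_iota_cross D) ?mulmx0 // eq_sym.
Qed.

Lemma pi_basis_change s (c : 'I_(k s)) i : pi s c i *m basis_change iota pi' i = pi' s c i.
Proof.
rewrite /basis_change mulmx_sumr (bigD1 s) //= [X in _ + X]big1 ?addr0 => [|s' ne].
  rewrite mulmx_sumr (bigD1 c) //= mulmxA (pi_iota D) mul1mx big1 ?addr0 // => c' ne'.
  by rewrite mulmxA (pi_iota_block D) (negbTE ne') mul0mx.
by rewrite mulmx_sumr big1 // => c' _; rewrite mulmxA (pi_iota_cross D) ?mul0mx.
Qed.

Lemma basis_changeK i : basis_change iota' pi i *m basis_change iota pi' i = 1%:M.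
Proof.
rewrite -(sum_iota_pi D' i) {1}/basis_change mulmx_suml; apply: eq_bigr => s _.
by rewrite mulmx_suml; apply: eq_bigr => c _; rewrite -mulmxA pi_basis_change.
Qed.

(* In the matrix-unit bases the endomorphisms of [B] and [B'] are the same
   block-scalar matrices, by Schur's lemma. *)
Lemma basis_change_end (phi : forall i, 'M[C]_(al i)) : is_hom B B phi ->
  is_hom B' B' (fun i => basis_change iota' pi i *m phi i *m basis_change iota pi' i).
Proof.
move=> Hphi; apply: (hom_eq (f := fun i => \sum_s \sum_(c : 'I_(k s)) \sum_(c' : 'I_(k s))
    iota' s c i *m (pi s c i *m phi i *m iota s c' i) *m pi' s c' i)).
  move=> i; have sum_conj (J : finType) (F : J -> 'M[C]_(al i)) (P Q : 'M[C]_(al i)) :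
      P *m (\sum_j F j) *m Q = \sum_j P *m F j *m Q by rewrite mulmx_sumr mulmx_suml.
  rewrite [in RHS](end_expand D i Hphi) sum_conj; apply: eq_bigr => s _.
  rewrite sum_conj; apply: eq_bigr => c _; rewrite sum_conj; apply: eq_bigr => c' _.
  by rewrite !mulmxA basis_change_iota -!mulmxA pi_basis_change.
apply: hom_sum => s; apply: hom_sum => c; apply: hom_sum => c'.
have [a Ha] := end_block_scalar D c' c Hphi.
apply: hom_eq (hom_comp (hom_comp (pi_hom D' c') (hom_scalar (M' s) a)) (iota_hom D' c)) => i.
by rewrite /= Ha mulmxA.
Qed.

End BasisChange.

Lemma stab_hom (al : I -> nat) (B : rep al) (x : forall i, 'M[C]_(al i)) :
  in_GL x -> (stab B x <-> is_hom B B x).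
Proof.
move=> GLx; split => [[_ Hx] a | Hx]; last first.
  by split => // a; have [e1 e2] := Hx a; rewrite e1 e2 !mulmxK.
by have [e1 e2] := Hx a; split; [rewrite -[in RHS]e1 | rewrite -[in RHS]e2]; rewrite mulmxKV.
Qed.

Lemma decomp_stab_conj lambda (al : I -> nat) (B B' : rep al) n (k : 'I_n -> nat)
    (d : 'I_n -> I -> nat) (M M' : forall s, rep (d s))
    (iota iota' : forall s (c : 'I_(k s)) i, 'M[C]_(al i, d s i))
    (pi pi' : forall s (c : 'I_(k s)) i, 'M[C]_(d s i, al i)) :
  decomp lambda B M iota pi -> decomp lambda B' M' iota' pi' ->
  conj_subsets (stab B) (stab B').
Proof.
move=> D D'; set T := basis_change iota' pi; set T' := basis_change iota pi'.
have TT' i : T i *m T' i = 1%:M := basis_changeK D D' i.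
have T'T i : T' i *m T i = 1%:M := basis_changeK D' D i.
have GL_T i : T i \in unitmx := (mulmx1_unit (TT' i)).1.
have invT i : invmx (T i) = T' i.
  by rewrite -[LHS]mulmx1 -(TT' i) mulmxA (mulVmx (GL_T i)) mul1mx.
exists T; split => // x; split => [Sx | Sy].
  have [GLx _] := Sx; have Hx := (stab_hom B GLx).1 Sx.
  have GLy : in_GL (fun i => T i *m x i *m invmx (T i)).
    by move=> i; rewrite !unitmx_mul GL_T GLx unitmx_inv GL_T.
  apply/(stab_hom B' GLy); apply: hom_eq (basis_change_end D D' Hx) => i.
  by rewrite invT.
have [GLy _] := Sy.
have Tx i : T' i *m (T i *m x i *m invmx (T i)) *m T i = x i.
  by rewrite invT !mulmxA T'T mul1mx -mulmxA T'T mulmx1.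
have GLx : in_GL x.
  move=> i; rewrite -Tx unitmx_mul (unitmx_mul (T' i)) (mulmx1_unit (T'T i)).1.
  by rewrite GLy GL_T.
apply/(stab_hom B GLx); apply: hom_eq (basis_change_end D' D ((stab_hom B' GLy).1 Sy)).
exact: Tx.
Qed.

Definition has_decomp lambda (al : I -> nat) (B : rep al) n (k : 'I_n -> nat)
    (d : 'I_n -> I -> nat) :=
  exists M iota pi, @decomp lambda al B n k d M iota pi.

Lemma has_reptypeE lambda (al : I -> nat) (B : rep al) (tau : reptype I) :
  has_reptype lambda B tau <-> has_decomp lambda B (@rt_mult I tau) (@rt_dim I tau).
Proof.
split=> [[M [k_gt0 simM nisoM [iota [pi [Hiota Hpi Hpi1 Hpi0 Hsum]]]]] | [M [iota [pi D]]]].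
  by exists M, iota, pi; split => // s; case: (simM s).
exists M; split.
- exact: mult_gt0 D.
- by move=> s; split; [exact: summand_Pi D s | exact: summand_simple D s].
- exact: summand_noniso D.
exists iota, pi; split.
- exact: iota_hom D.
- exact: pi_hom D.
- exact: pi_iota D.
- exact: pi_iota_ne D.
- exact: sum_iota_pi D.
Qed.

Lemma has_decomp_reindex lambda (al : I -> nat) (B : rep al)
    n0 (k0 : 'I_n0 -> nat) (d0 : 'I_n0 -> I -> nat)
    n1 (k1 : 'I_n1 -> nat) (d1 : 'I_n1 -> I -> nat) (sg : 'I_n0 -> 'I_n1) :
  bijective sg -> (forall s, k0 s = k1 (sg s)) -> (forall s i, d0 s i = d1 (sg s) i) ->
  has_decomp lambda B k1 d1 -> has_decomp lambda B k0 d0.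
Proof.
move=> bij_sg Hk Hd; have sg_inj := bij_inj bij_sg.
have -> : k0 = k1 \o sg by apply: functional_extensionality.
have -> : d0 = d1 \o sg.
  by apply: functional_extensionality => s; apply: functional_extensionality.
case=> M [iota [pi D]].
exists (fun s => M (sg s)), (fun s => iota (sg s)), (fun s => pi (sg s)); split.
- by move=> s; apply: (mult_gt0 D).
- by move=> s; apply: (summand_Pi D).
- by move=> s; apply: (summand_simple D).
- by move=> s s' ne; apply: (summand_noniso D); rewrite (inj_eq sg_inj).
- by move=> s c; apply: (iota_hom D).
- by move=> s c; apply: (pi_hom D).
- by move=> s c i; apply: (pi_iota D).
- move=> s c s' c' i ne; apply: (pi_iota_ne D).
  by apply: contra ne; rewrite !xpair_eqE (inj_eq sg_inj).
- by move=> i; rewrite -(sum_iota_pi D i) (reindex sg) //; apply: onW_bij.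
Qed.

Lemma has_decomp_iso lambda (al : I -> nat) (B B' : rep al) n (k : 'I_n -> nat)
    (d : 'I_n -> I -> nat) (g g' : forall i, 'M[C]_(al i)) :
  (forall i, g' i *m g i = 1%:M) -> (forall i, g i *m g' i = 1%:M) ->
  is_hom B B' g -> has_decomp lambda B k d -> has_decomp lambda B' k d.
Proof.
move=> g'g gg' Hg [M [iota [pi D]]]; have Hg' := hom_inv g'g gg' Hg.
exists M, (fun s c i => g i *m iota s c i), (fun s c i => pi s c i *m g' i); split.
- exact: mult_gt0 D.
- exact: summand_Pi D.
- exact: summand_simple D.
- exact: summand_noniso D.
- by move=> s c; apply: hom_comp (iota_hom D c) Hg.
- by move=> s c; apply: hom_comp Hg' (pi_hom D c).
- by move=> s c i; rewrite -mulmxA (mulmxA (g' i)) g'g mul1mx (pi_iota D).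
- by move=> s c s' c' i ne; rewrite -mulmxA (mulmxA (g' i)) g'g mul1mx (pi_iota_ne D).
- move=> i; rewrite -(gg' i) -[in RHS](mulmx1 (g i)) -(sum_iota_pi D i) mulmx_sumr mulmx_suml.
  apply: eq_bigr => s _; rewrite mulmx_sumr mulmx_suml.
  by apply: eq_bigr => c _; rewrite !mulmxA.
Qed.

Definition conj_rep (al : I -> nat) (g : GLfam C al) (B : rep al) : rep al :=
  Rep (fun a => g (h a) *m arr B a *m invmx (g (t a)))
      (fun a => g (t a) *m arrs B a *m invmx (g (h a))).

Lemma conj_rep_hom (al : I -> nat) (g : GLfam C al) (B : rep al) :
  in_GL g -> is_hom B (conj_rep g B) g.
Proof. by move=> GLg a; split; rewrite /= mulmxKV. Qed.

Lemma conj_rep_end (al : I -> nat) (g : GLfam C al) (B : rep al) (y : forall i, 'M[C]_(al i)) :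
  in_GL g -> is_hom (conj_rep g B) (conj_rep g B) y <->
             is_hom B B (fun i => invmx (g i) *m y i *m g i).
Proof.
move=> GLg; have Hg := conj_rep_hom B GLg.
have Hg' := hom_inv (fun i => mulVmx (GLg i)) (fun i => mulmxV (GLg i)) Hg.
split=> Hy; first by apply: hom_eq (hom_comp (hom_comp Hg Hy) Hg') => i; rewrite mulmxA.
apply: hom_eq (hom_comp (hom_comp Hg' Hy) Hg) => i.
by rewrite !mulmxA mulmxV // mul1mx -mulmxA mulmxV // mulmx1.
Qed.

Lemma conj_stab_end (al : I -> nat) (B B0 : rep al) (g : GLfam C al) :
  in_GL g -> (forall x, stab B x <-> stab B0 (fun i => g i *m x i *m invmx (g i))) ->
  forall y, in_GL y -> is_hom B0 B0 y <-> is_hom (conj_rep g B) (conj_rep g B) y.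
Proof.
move=> GLg stab_g y GLy; pose z i := invmx (g i) *m y i *m g i.
have GLz : in_GL z by move=> i; rewrite !unitmx_mul unitmx_inv GLg GLy.
have yE : (fun i => g i *m z i *m invmx (g i)) = y.
  apply: functional_extensionality_dep => i.
  by rewrite /z !mulmxA mulmxV // mul1mx -mulmxA mulmxV // mulmx1.
by rewrite conj_rep_end // -(stab_hom B GLz) stab_g yE stab_hom.
Qed.

Section SameEndomorphisms.
Unset Implicit Arguments.
Variables (lambda : I -> C) (al : I -> nat) (B0 B1 : rep al)
  (n0 : nat) (k0 : 'I_n0 -> nat) (d0 : 'I_n0 -> I -> nat) (M0 : forall s, rep (d0 s))
  (iota0 : forall s (c : 'I_(k0 s)) i, 'M[C]_(al i, d0 s i))
  (pi0 : forall s (c : 'I_(k0 s)) i, 'M[C]_(d0 s i, al i))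
  (n1 : nat) (k1 : 'I_n1 -> nat) (d1 : 'I_n1 -> I -> nat) (M1 : forall s, rep (d1 s))
  (iota1 : forall s (c : 'I_(k1 s)) i, 'M[C]_(al i, d1 s i))
  (pi1 : forall s (c : 'I_(k1 s)) i, 'M[C]_(d1 s i, al i)).
Set Implicit Arguments.
Hypotheses (D0 : decomp lambda B0 M0 iota0 pi0) (D1 : decomp lambda B1 M1 iota1 pi1).
Hypothesis same_end : forall phi, is_hom B0 B0 phi <-> is_hom B1 B1 phi.

Local Notation P0 := (isoproj iota0 pi0).
Local Notation P1 := (isoproj iota1 pi1).

(* Both families of isotypic projections are the primitive central idempotents
   of the common endomorphism algebra. *)
Lemma isoproj_match s : exists u, forall i, P0 s i = P1 u i.
Proof.
have central0 phi : is_hom B1 B1 phi -> forall i, P0 s i *m phi i = phi i *m P0 s i.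
  by move=> /same_end Hphi i; apply: isoproj_central D0 _ _ _ Hphi.
have idem0 i : P0 s i *m P0 s i = P0 s i by rewrite (isoproj_mul D0) eqxx.
have [a [a01 Ha]] :=
  central_idem_end_comb D1 ((same_end _).1 (isoproj_hom D0 s)) central0 idem0.
have [u au] : exists u, a u = 1.
  case: (pickP (fun u => a u == 1)) => [u /eqP au | none]; first by exists u.
  have [i nz] := isoproj_neq0 D0 s; move: nz; rewrite Ha big1 ?eqxx // => v _.
  by case: (a01 v) => av; [rewrite av scale0r | move: (none v); rewrite /= av eqxx].
have central1 phi : is_hom B0 B0 phi -> forall i, P1 u i *m phi i = phi i *m P1 u i.
  by move=> /same_end Hphi i; apply: isoproj_central D1 _ _ _ Hphi.
have idem1 i : P1 u i *m P1 u i = P1 u i by rewrite (isoproj_mul D1) eqxx.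
have [b [b01 Hb]] :=
  central_idem_end_comb D0 ((same_end _).2 (isoproj_hom D1 u)) central1 idem1.
have P01 i : P0 s i *m P1 u i = P1 u i by rewrite Ha (isoproj_comb_mul D1) au scale1r.
have P1E i : P1 u i = b s *: P0 s i.
  by rewrite -P01 (central0 _ (isoproj_hom D1 u)) Hb (isoproj_comb_mul D0).
exists u => i; case: (b01 s) => bs; last by rewrite P1E bs scale1r.
have [j nz] := isoproj_neq0 D1 u.
by move: nz; rewrite P1E bs scale0r eqxx.
Qed.

Lemma summand_dim_mul s u : (forall i, P0 s i = P1 u i) ->
  exists2 r, (0 < r)%N & forall i, d0 s i = (r * d1 u i)%N.
Proof.
move=> P01; pose c0 : 'I_(k0 s) := Ordinal (mult_gt0 D0 s).
pose w i := iota0 s c0 i *m pi0 s c0 i.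
have Hw : is_hom B1 B1 w := (same_end _).1 (mxunit_hom D0 c0 c0).
have idem_w i : w i *m w i = w i.
  by rewrite /w mulmxA -(mulmxA _ (pi0 _ _ _)) (pi_iota D0) mulmx1.
have w_in_u i : P1 u i *m w i = w i by rewrite -P01 /w mulmxA (isoproj_iota D0) eqxx.
have [r Hr] := idem_block_trace D1 Hw idem_w w_in_u.
have Hd i : d0 s i = (r * d1 u i)%N.
  by apply/eqP; rewrite -(eqr_nat C) -Hr /w mxtrace_mulC (pi_iota D0) mxtrace1.
exists r => //; have [i d_gt0] := summand_dim_gt0 D0 s.
by move: d_gt0; rewrite Hd muln_gt0 => /andP [].
Qed.

End SameEndomorphisms.

Lemma same_end_decomp_match lambda (al : I -> nat) (B0 B1 : rep al)
    n0 (k0 : 'I_n0 -> nat) (d0 : 'I_n0 -> I -> nat) n1 (k1 : 'I_n1 -> nat)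
    (d1 : 'I_n1 -> I -> nat) :
  has_decomp lambda B0 k0 d0 -> has_decomp lambda B1 k1 d1 ->
  (forall phi, is_hom B0 B0 phi <-> is_hom B1 B1 phi) ->
  exists sg : 'I_n0 -> 'I_n1,
    [/\ bijective sg, forall s, k0 s = k1 (sg s) & forall s i, d0 s i = d1 (sg s) i].
Proof.
move=> [M0 [iota0 [pi0 D0]]] [M1 [iota1 [pi1 D1]]] ends.
have ends' phi := iff_sym (ends phi).
have /fin_all_exists [sg Psg] := isoproj_match D0 D1 ends.
have /fin_all_exists [sg' Psg'] := isoproj_match D1 D0 ends'.
have sgK : cancel sg sg' by move=> s; apply: (isoproj_inj D0) => i; rewrite [RHS]Psg Psg'.
have sg'K : cancel sg' sg by move=> u; apply: (isoproj_inj D1) => i; rewrite [RHS]Psg' Psg.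
have Hd s i : d0 s i = d1 (sg s) i.
  have [r _ Hr] := summand_dim_mul D0 D1 ends (Psg s).
  have [r' _ Hr'] := summand_dim_mul D1 D0 ends' (fun i => esym (Psg s i)).
  have [j d_gt0] := summand_dim_gt0 D0 s.
  have : (r * r' * d0 s j == 1 * d0 s j)%N by rewrite -mulnA -Hr' -Hr mul1n.
  by rewrite eqn_pmul2r // muln_eq1 => /andP [/eqP r1 _]; rewrite Hr r1 mul1n.
exists sg; split => [| s |//]; first by exists sg'.
have [i d_gt0] := summand_dim_gt0 D0 s.
have := mxtrace_isoproj D0 s i; rewrite Psg (mxtrace_isoproj D1) -Hd => /eqP.
by rewrite eqr_nat eqn_pmul2r // => /eqP.
Qed.

Lemma has_decomp_of_stab_conj lambda (al : I -> nat) (B B0 : rep al)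
    n0 (k0 : 'I_n0 -> nat) (d0 : 'I_n0 -> I -> nat) n1 (k1 : 'I_n1 -> nat)
    (d1 : 'I_n1 -> I -> nat) :
  has_decomp lambda B0 k0 d0 -> has_decomp lambda B k1 d1 ->
  conj_subsets (stab B) (stab B0) -> has_decomp lambda B k0 d0.
Proof.
move=> decB0 decB [g [GLg stab_g]].
have g'g i : invmx (g i) *m g i = 1%:M by rewrite mulVmx.
have gg' i : g i *m invmx (g i) = 1%:M by rewrite mulmxV.
have Hg := conj_rep_hom B GLg.
have decB1 := has_decomp_iso g'g gg' Hg decB.
have units := conj_stab_end GLg stab_g.
have ends phi : is_hom B0 B0 phi <-> is_hom (conj_rep g B) (conj_rep g B) phi.
  have [[M0 [iota0 [pi0 D0]]] [M1 [iota1 [pi1 D1]]]] := (decB0, decB1).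
  split => Hphi; [apply: (end_of_units D0 _ Hphi) | apply: (end_of_units D1 _ Hphi)].
    by move=> x GLx; apply: (units x GLx).1.
  by move=> x GLx; apply: (units x GLx).2.
have [sg [bij_sg Hk Hd]] := same_end_decomp_match decB0 decB1 ends.
exact: has_decomp_iso gg' g'g (hom_inv g'g gg' Hg) (has_decomp_reindex bij_sg Hk Hd decB1).
Qed.

End QuiverModules.

Theorem theorem5p4 (R : realType) (I A : finType) (h t : A -> I)
    (alpha : I -> nat) (lambda : I -> R[i])
    (hla : \sum_(i : I) lambda i * (alpha i)%:R = 0)
    (tau : reptype I)
    (hne : exists B : rep (R[i]) h t alpha,
             is_Pi_mod lambda B /\ has_reptype lambda B tau) :
  exists nu : GLfam (R[i]) alpha -> Prop,
    forall B : rep (R[i]) h t alpha,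
      is_Pi_mod lambda B -> semisimple lambda B ->
      (has_reptype lambda B tau <-> conj_subsets (stab B) nu).
Proof.
case: hne => B0 [_ /has_reptypeE decB0]; exists (stab B0) => B _ [tau' /has_reptypeE decB].
rewrite has_reptypeE; split => [[M [iota [pi D]]] | ].
  by have [M0 [iota0 [pi0 D0]]] := decB0; apply: decomp_stab_conj D D0.
exact: has_decomp_of_stab_conj decB0 decB.
Qed.
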